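(* Let $N\ge 2$ and $x_0<x_1<\dots<x_{N-1}<x_N$. Let $\rho$ be an integrable function on $[x_0,x_N]$, let $G(x,s)$ be the Green function of the boundary value problem $\varphi''(x)=-\rho(x)$, $\varphi(x_0)=\varphi(x_N)=0$ on $[x_0,x_N]$, and let $\varphi(x)=\int_{x_0}^{x_N}G(x,s)\rho(s)\,ds$ be the solution of this problem. Define $$\alpha_j^R=\int_{x_{j-1}}^{x_j}G(x_j,s)\rho(s)\,ds\quad (j=1,\dots,N-1),\qquad \alpha_j^L=\int_{x_{j-1}}^{x_j}G(x_{j-1},s)\rho(s)\,ds\quad (j=2,\dots,N).$$ Then for every $i=1,\dots,N-1$, $$\varphi(x_i)=\sum_{j=1}^{i}\alpha_j^R\,\frac{x_i-x_N}{x_j-x_N}+\sum_{j=i+1}^{N}\alpha_j^L\,\frac{x_i-x_0}{x_{j-1}-x_0}.$$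
   Context: The Green function here is $G(x,s)=\frac{(\min(x,s)-x_0)(x_N-\max(x,s))}{x_N-x_0}$, so that $\varphi(x)=\int_{x_0}^{x_N}G(x,s)\rho(s)\,ds$ solves $\varphi''=-\rho$ with $\varphi(x_0)=\varphi(x_N)=0$. *)

From HB Require Import structures.
From mathcomp Require Import all_boot all_order all_algebra.
From mathcomp Require Import all_classical all_reals all_analysis.
Set Implicit Arguments. Unset Strict Implicit. Unset Printing Implicit Defensive.
Import Order.TTheory GRing.Theory Num.Theory.
Import numFieldNormedType.Exports.
Local Open Scope classical_set_scope.
Local Open Scope ring_scope.

Definition green {R : realType} (a b x s : R) : R :=
  (Order.min x s - a) * (b - Order.max x s) / (b - a).

Definition green_sol {R : realType} (a b : R) (rho : R -> R) (x : R) : R :=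
  \int[lebesgue_measure]_(s in `[a, b]) (green a b x s * rho s).

Definition alphaR {R : realType} (N : nat) (x : nat -> R) (rho : R -> R)
    (j : nat) : R :=
  \int[lebesgue_measure]_(s in `[x j.-1, x j]) (green (x 0%N) (x N) (x j) s * rho s).

Definition alphaL {R : realType} (N : nat) (x : nat -> R) (rho : R -> R)
    (j : nat) : R :=
  \int[lebesgue_measure]_(s in `[x j.-1, x j])
     (green (x 0%N) (x N) (x j.-1) s * rho s).

From HB Require Import structures.
From mathcomp Require Import all_boot all_order all_algebra.
From mathcomp Require Import all_classical all_reals all_analysis.
From mathcomp Require Import ring lra measurable_realfun.
Import Order.TTheory GRing.Theory Num.Theory.
Import numFieldNormedType.Exports.
Local Open Scope classical_set_scope.
Local Open Scope ring_scope.

(* For a fixed first argument, G(x, s) is affine in s on each side of x,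
   vanishing at the corresponding endpoint; hence on a cell [x_{j-1}, x_j]
   lying left of x_i, G(x_i, .) is the multiple (x_i - x_N)/(x_j - x_N) of
   G(x_j, .), and on a cell lying right of x_i it is the multiple
   (x_i - x_0)/(x_{j-1} - x_0) of G(x_{j-1}, .). Splitting
   int_{x_0}^{x_N} G(x_i, s) rho(s) ds over the cells gives the formula. *)

Lemma homo_lt_prefix {R : realType} {N : nat} {x : nat -> R} :
  (forall k, (k < N)%N -> x k < x k.+1) ->
  forall m n, (m < n)%N -> (n <= N)%N -> x m < x n.
Proof.
move=> hx m n mn nN.
have xlt : {in [pred k | (k <= N)%N] &, {homo x : m n / (m < n)%N >-> m < n}}.
  apply: homo_ltn_in => [y z t|i j _ /[!inE] jN k /andP[_ kj]|i _ /[!inE] /hx //].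
    exact: lt_trans.
  by rewrite inE ltnW // (leq_trans kj).
by apply: xlt; rewrite // inE (leq_trans (ltnW mn)).
Qed.

Lemma homo_le_prefix {R : realType} {N : nat} {x : nat -> R} :
  (forall k, (k < N)%N -> x k < x k.+1) ->
  forall m n, (m <= n)%N -> (n <= N)%N -> x m <= x n.
Proof.
move=> hx m n; rewrite leq_eqVlt => /orP[/eqP -> //|mn nN].
exact: ltW (homo_lt_prefix hx _ _ mn nN).
Qed.

Section Green.
Context {R : realType} {a b : R} (ab : a < b).

Lemma green_le (y s : R) : s <= y -> green a b y s = (s - a) * (b - y) / (b - a).
Proof. by move=> sy; rewrite /green (min_r sy) (max_l sy). Qed.

Lemma green_ge (y s : R) : y <= s -> green a b y s = (y - a) * (b - s) / (b - a).
Proof. by move=> ys; rewrite /green (min_l ys) (max_r ys). Qed.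

Lemma green_rescale_right (y z s : R) : s <= y -> y <= z -> y < b ->
  green a b z s = (z - b) / (y - b) * green a b y s.
Proof.
move=> sy yz yb; rewrite !green_le //; last exact: le_trans yz.
by field; rewrite !subr_eq0 (gt_eqF ab) (lt_eqF yb).
Qed.

Lemma green_rescale_left (y z s : R) : a < y -> y <= z -> z <= s ->
  green a b y s = (y - a) / (z - a) * green a b z s.
Proof.
move=> ay yz zs; rewrite !green_ge //; last exact: le_trans zs.
by field; rewrite !subr_eq0 (gt_eqF ab) (gt_eqF (lt_le_trans ay yz)).
Qed.

Lemma normr_green_le {y s : R} : a <= y <= b -> a <= s <= b ->
  `|green a b y s| <= b - a.
Proof.
move=> /andP[ay yb] /andP[a_s sb].
have ba : 0 < b - a by rewrite subr_gt0.
have [sy|/ltW ys] := leP s y; [rewrite green_le // | rewrite green_ge //];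
  (rewrite ger0_norm ?ler_pdivrMr //; first by apply: ler_pM; lra);
  by apply: divr_ge0; [apply: mulr_ge0|]; lra.
Qed.

Lemma measurable_green (y : R) (D : set R) : measurable_fun D (green a b y).
Proof.
apply: measurable_funM; last exact: measurable_cst.
apply: measurable_funM; apply: measurable_funB; try exact: measurable_cst.
- exact: measurable_minr (measurable_cst y) (@measurable_id _ _ D).
- exact: measurable_maxr (measurable_cst y) (@measurable_id _ _ D).
Qed.

Context {rho : R -> R} (rho_int : lebesgue_measure.-integrable `[a, b] (EFin \o rho)).

Lemma integrable_green_mul (y c d : R) : a <= y <= b -> a <= c -> d <= b ->
  lebesgue_measure.-integrable `[c, d] (EFin \o (fun s => green a b y s * rho s)).
Proof.
move=> yab ac db.
have cd_ab : `[c, d] `<=` `[a, b].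
  by move=> s /=; rewrite !in_itv /= => /andP[cs sd]; apply/andP; split; lra.
have rho_int_cd : lebesgue_measure.-integrable `[c, d] (EFin \o rho).
  exact: integrableS rho_int.
have green_bnd : [bounded green a b y s | s in `[c, d]].
  rewrite /bounded_near; near=> M => s /cd_ab /=; rewrite in_itv /= => sab.
  apply: le_trans (normr_green_le yab sab) _.
  by near: M; apply: nbhs_pinfty_ge; exact: num_real.
(* [measurableTypeR R] is the sigma-algebra of [lebesgue_measure]; left
   implicit, the Borel one would be inferred. *)
have green_mfun : @measurable_fun _ _ (measurableTypeR R) R `[c, d] (green a b y).
  exact: measurable_green.
have := integrableMr _ green_mfun green_bnd rho_int_cd.
by move=> /(_ (measurable_itv _)); apply: eq_integrable.
Unshelve. all: by end_near.
Qed.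

Lemma Rintegral_green_rescale_right (c d y z : R) :
  a <= c -> c <= d -> d <= y -> y <= z -> z < b ->
  \int[lebesgue_measure]_(s in `[c, d]) (green a b z s * rho s) =
  (z - b) / (y - b) * \int[lebesgue_measure]_(s in `[c, d]) (green a b y s * rho s).
Proof.
move=> ac cd dy yz zb.
rewrite -RintegralZl //; last by apply: integrable_green_mul => //; lra.
apply: eq_Rintegral => s; rewrite inE /= in_itv /= => /andP[_ sd].
by rewrite mulrA -green_rescale_right //; lra.
Qed.

Lemma Rintegral_green_rescale_left (c d y z : R) :
  a < y -> y <= z -> z <= c -> c <= d -> d <= b ->
  \int[lebesgue_measure]_(s in `[c, d]) (green a b y s * rho s) =
  (y - a) / (z - a) * \int[lebesgue_measure]_(s in `[c, d]) (green a b z s * rho s).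
Proof.
move=> ay yz zc cd db.
rewrite -RintegralZl //; last by apply: integrable_green_mul => //; lra.
apply: eq_Rintegral => s; rewrite inE /= in_itv /= => /andP[cs _].
by rewrite mulrA -green_rescale_left //; lra.
Qed.

End Green.

Lemma Rintegral_itv_partition {R : realType} {N : nat} {x : nat -> R} {f : R -> R} :
  (forall k, (k < N)%N -> x k < x k.+1) ->
  lebesgue_measure.-integrable `[x 0%N, x N] (EFin \o f) ->
  forall k, (k <= N)%N ->
  \int[lebesgue_measure]_(s in `[x 0%N, x k]) f s =
  \sum_(1 <= j < k.+1) \int[lebesgue_measure]_(s in `[x j.-1, x j]) f s.
Proof.
move=> hx f_int; elim=> [|k IH] kN.
  by rewrite set_itv1 Rintegral_set1 big_geq.
rewrite big_nat_recr //= -IH ?(ltnW kN) //.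
have x0k := homo_le_prefix hx _ _ (leq0n k) (ltnW kN).
have xkk1 := hx k kN.
have f_int_k1 : lebesgue_measure.-integrable `[x 0%N, x k.+1] (EFin \o f).
  apply: integrableS f_int => //; apply/subset_itvP/subset_itvl.
  by rewrite bnd_simp (homo_le_prefix hx).
have := @Rintegral_itvB R f _ _ (x k) f_int_k1; rewrite !bnd_simp => /(_ x0k (ltW xkk1)).
rewrite Rintegral_itv_obnd_cbnd; first by move=> <-; lra.
by apply: integrableS f_int_k1 => //; apply/subset_itvP/subset_itvr; rewrite bnd_simp.
Qed.

Theorem theorem1 (R : realType) (N : nat) (x : nat -> R) (rho : R -> R) :
  (2 <= N)%N ->
  (forall k : nat, (k < N)%N -> x k < x k.+1) ->
  lebesgue_measure.-integrable `[x 0%N, x N] (EFin \o rho) ->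
  forall i : nat, (1 <= i)%N -> (i <= N.-1)%N ->
    green_sol (x 0%N) (x N) rho (x i) =
      \sum_(1 <= j < i.+1) alphaR N x rho j * ((x i - x N) / (x j - x N))
    + \sum_(i.+1 <= j < N.+1) alphaL N x rho j * ((x i - x 0%N) / (x j.-1 - x 0%N)).
Proof.
move=> N2 hx rho_int i i1 iN1.
have iN : (i < N)%N by case: N N2 iN1 {hx rho_int} => // n _; rewrite ltnS.
have xlt := homo_lt_prefix hx; have xle := homo_le_prefix hx.
have x0N : x 0%N < x N by apply: xlt => //; exact: leq_trans N2.
have x0i : x 0%N <= x i <= x N by rewrite !xle ?(ltnW iN).
rewrite /green_sol (Rintegral_itv_partition hx _ _ (leqnn N)); last first.
  exact: integrable_green_mul.
rewrite (big_cat_nat _ (n := i.+1)) //=; last exact: ltnW.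
congr (_ + _); apply: eq_big_nat => j /andP[j1 ji].
- have jN : (j < N)%N by apply: leq_ltn_trans iN; rewrite -ltnS.
  rewrite [RHS]mulrC (Rintegral_green_rescale_right x0N rho_int _ _ (x j) (x i)) //.
  + by apply: xle => //; exact: leq_trans (leq_pred _) (ltnW jN).
  + by apply: xle; [exact: leq_pred | exact: ltnW].
  + by apply: xle; [rewrite -ltnS | exact: ltnW].
  + exact: xlt.
- have ij1 : (i <= j.-1)%N by rewrite -ltnS (ltn_predK j1).
  have j1N : (j.-1 <= N)%N := leq_trans (leq_pred j) ji.
  rewrite [RHS]mulrC (Rintegral_green_rescale_left x0N rho_int _ _ (x i) (x j.-1)) //.
  + exact: xlt i1 (ltnW iN).
  + exact: xle ij1 j1N.
  + exact: xle (leq_pred j) ji.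
  + exact: xle j N ji (leqnn N).
Qed.
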